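(* For every $\gamma>0$, the matrix $\gamma 1$ is the unique strictly positive fixed point of the noncommutative Ricci flow having trace $n\gamma$; that is, if $c\in M_n$ is strictly positive with $\triangle\log c=0$ and $\tau(c)=n\gamma$, then $c=\gamma 1$.
   Context: Let $n\ge 2$, let $m\in\{1,\dots,n-1\}$ be relatively prime to $n$, and set $q=e^{2\pi i m/n}$. Let $M_n$ be the algebra of complex $n\times n$ matrices with identity $1$. Let $u=\mathrm{diag}(1,q,\dots,q^{n-1})$ and let $v$ be the cyclic shift matrix with $v_{j,j+1}=1$ for $j=1,\dots,n-1$, $v_{n,1}=1$, other entries $0$. Let $x,y$ be any Hermitian matrices with $u=e^{\frac{2\pi i}{n}x}$ and $v=e^{\frac{2\pi i}{n}y}$. Define $\delta_1(a)=[y,a]$, $\delta_2(a)=-[x,a]$ and $\triangle=\delta_1^2+\delta_2^2$ on $M_n$. $\tau$ is the usual trace; $\log$ of a strictly positive matrix is defined by functional calculus. The noncommutative Ricci flow is $\frac{d}{dt}c(t)=-\triangle\log c(t)$. *)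

(* complex numbers over Stdlib reals, n x n complex matrices
   represented as functions nat -> nat -> C, only entries with indices < n matter. *)
From Stdlib Require Import Reals Lra Lia.
Open Scope R_scope.

Record C := mkC { Re : R; Im : R }.

Definition C0 : C := mkC 0 0.
Definition C1 : C := mkC 1 0.
Definition RtoC (r : R) : C := mkC r 0.
Definition Cadd (a b : C) : C := mkC (Re a + Re b) (Im a + Im b).
Definition Copp (a : C) : C := mkC (- Re a) (- Im a).
Definition Cmul (a b : C) : C :=
  mkC (Re a * Re b - Im a * Im b) (Re a * Im b + Im a * Re b).
Definition Cconj (a : C) : C := mkC (Re a) (- Im a).
Definition cis (t : R) : C := mkC (cos t) (sin t).

Fixpoint Csum (k : nat) (f : nat -> C) : C :=
  match k with
  | O => C0
  | S k' => Cadd (Csum k' f) (f k')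
  end.

Definition Mat := nat -> nat -> C.

Definition Mmul (n : nat) (A B : Mat) : Mat :=
  fun i j => Csum n (fun k => Cmul (A i k) (B k j)).
Definition Madd (A B : Mat) : Mat := fun i j => Cadd (A i j) (B i j).
Definition Mopp (A : Mat) : Mat := fun i j => Copp (A i j).
Definition Msub (A B : Mat) : Mat := Madd A (Mopp B).
Definition Madj (A : Mat) : Mat := fun i j => Cconj (A j i).
Definition Mdiag (d : nat -> C) : Mat :=
  fun i j => if Nat.eqb i j then d i else C0.
Definition Mid : Mat := Mdiag (fun _ => C1).
Definition Mzero : Mat := fun _ _ => C0.
Definition Mscal (a : C) (A : Mat) : Mat := fun i j => Cmul a (A i j).
Definition Mtrace (n : nat) (A : Mat) : C := Csum n (fun i => A i i).

Definition Meq (n : nat) (A B : Mat) : Prop :=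
  forall i j, (i < n)%nat -> (j < n)%nat -> A i j = B i j.

Definition hermitian (n : nat) (A : Mat) : Prop := Meq n (Madj A) A.

Definition unitary (n : nat) (U : Mat) : Prop :=
  Meq n (Mmul n U (Madj U)) Mid /\ Meq n (Mmul n (Madj U) U) Mid.

Definition strictly_positive (n : nat) (A : Mat) : Prop :=
  hermitian n A /\
  forall v : nat -> C, (exists k, (k < n)%nat /\ v k <> C0) ->
    Re (Csum n (fun i => Cmul (Cconj (v i)) (Csum n (fun j => Cmul (A i j) (v j))))) > 0.

(* Functional calculus for self-adjoint matrices: B = f(A), where
   A = U diag(d) U^* with U unitary and d real, and B = U diag(f d) U^*.
   (Defined relationally; f(A) is independent of the chosen diagonalisation.) *)
Definition fcalc (n : nat) (dom : R -> Prop) (f : R -> C) (A B : Mat) : Prop :=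
  exists (U : Mat) (d : nat -> R),
    unitary n U /\ (forall k, (k < n)%nat -> dom (d k)) /\
    Meq n A (Mmul n (Mmul n U (Mdiag (fun k => RtoC (d k)))) (Madj U)) /\
    Meq n B (Mmul n (Mmul n U (Mdiag (fun k => f (d k)))) (Madj U)).

Definition is_log (n : nat) (c L : Mat) : Prop :=
  fcalc n (fun t => 0 < t) (fun t => RtoC (ln t)) c L.

Definition is_exp2pi (n : nat) (x u : Mat) : Prop :=
  fcalc n (fun _ => True) (fun t => cis (2 * PI * t / INR n)) x u.

Definition qpow (n m j : nat) : C := cis (2 * PI * INR m * INR j / INR n).
Definition umat (n m : nat) : Mat := Mdiag (fun j => qpow n m j).
Definition vmat (n : nat) : Mat :=
  fun i j => if Nat.eqb j (Nat.modulo (S i) n) then C1 else C0.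

Definition comm (n : nat) (A B : Mat) : Mat := Msub (Mmul n A B) (Mmul n B A).
Definition delta1 (n : nat) (x y a : Mat) : Mat := comm n y a.
Definition delta2 (n : nat) (x y a : Mat) : Mat := Mopp (comm n x a).
Definition lap (n : nat) (x y a : Mat) : Mat :=
  Madd (delta1 n x y (delta1 n x y a)) (delta2 n x y (delta2 n x y a)).

From Pilot Require Import Defs.
From Stdlib Require Import Reals Lra Lia.
Open Scope R_scope.

(* Let L = log c with dL/dt = -(ad_y^2 + ad_x^2) L = 0.  The argument has
   three steps, each resting on a general fact about matrices:
   1. For hermitian X, Y, L, tr (L (ad_Y^2 + ad_X^2) L) = |[Y,L]|^2 + |[X,L]|^2
      (Hilbert-Schmidt norms), so L commutes with x and y (laplacian_kernel).
   2. Whatever commutes with a hermitian matrix commutes with every function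
      of it (commute_diag_fun), so L commutes with u = e^{2 pi i x/n} and with
      v = e^{2 pi i y/n}.  As gcd(m, n) = 1 the eigenvalues q^j of u are
      distinct, so L is diagonal; commuting with the cyclic shift v makes its
      diagonal constant (commutant_uv).
   3. log c scalar forces c scalar because ln is injective on the positive
      eigenvalues of c (log_scalar); the trace then identifies the scalar.  Strict
   positivity of c is only used through the domain of ln in is_log. *)

Module RicciFixedPoint.
From mathcomp Require Import all_boot all_order all_algebra Rstruct complex.
Import Order.TTheory GRing.Theory Num.Theory.

Section Adjoint.
Local Open Scope ring_scope.
Context {C : numClosedFieldType} {n : nat}.
Implicit Types A B L X Y Z : 'M[C]_n.

Definition adjmx A : 'M[C]_n := (map_mx Num.conj A)^T.
Definition mcomm A B : 'M[C]_n := A *m B - B *m A.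

Lemma adjmxM A B : adjmx (A *m B) = adjmx B *m adjmx A.
Proof. by rewrite /adjmx map_mxM trmx_mul. Qed.

Lemma adjmxK A : adjmx (adjmx A) = A.
Proof. by apply/matrixP=> i j; rewrite !mxE conjCK. Qed.

Lemma adjmxB A B : adjmx (A - B) = adjmx A - adjmx B.
Proof. by apply/matrixP=> i j; rewrite !mxE rmorphB. Qed.

Lemma tr_adjmx_mul A : \tr (adjmx A *m A) = \sum_i \sum_k `|A k i| ^+ 2.
Proof.
apply: eq_bigr => i _; rewrite mxE; apply: eq_bigr => k _.
by rewrite !mxE normCK mulrC.
Qed.

Lemma tr_adjmx_ge0 A : 0 <= \tr (adjmx A *m A).
Proof.
by rewrite tr_adjmx_mul; apply/sumr_ge0 => i _; apply/sumr_ge0 => k _;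
  apply: exprn_ge0.
Qed.

Lemma tr_adjmx_eq0 A : \tr (adjmx A *m A) = 0 -> A = 0.
Proof.
have sq_ge0 (z : C) : 0 <= `|z| ^+ 2 by apply: exprn_ge0.
rewrite tr_adjmx_mul => /psumr_eq0P sum0; apply/matrixP => k i; rewrite mxE.
have /psumr_eq0P col0 := sum0 (fun i _ => sumr_ge0 _ (fun _ _ => sq_ge0 _)) i isT.
have /eqP := col0 (fun _ _ => sq_ge0 _) k isT.
by rewrite sqrf_eq0 normr_eq0 => /eqP.
Qed.

Lemma mcommNr A B : mcomm A (- B) = - mcomm A B.
Proof. by rewrite /mcomm mulmxN mulNmx opprB opprK addrC. Qed.

Lemma tr_double_comm Z L : adjmx Z = Z -> adjmx L = L ->
  \tr (L *m mcomm Z (mcomm Z L)) = \tr (adjmx (mcomm Z L) *m mcomm Z L).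
Proof.
move=> hZ hL; rewrite /mcomm adjmxB !adjmxM hZ hL.
rewrite !(mulmxBr, mulmxBl) !raddfB /= !mulmxA.
have cyc (A B M N : 'M[C]_n) : \tr (A *m B *m M *m N) = \tr (N *m A *m B *m M).
  by rewrite mxtrace_mulC !mulmxA.
by rewrite (cyc Z L Z L) (cyc Z L L Z) (cyc Z Z L L) (cyc L Z Z L).
Qed.

(* The kernel of the Laplacian ad_Y^2 + ad_X^2 on hermitian matrices consists
   of the matrices commuting with both X and Y: pair with L and take traces. *)
Lemma laplacian_kernel {X Y L} : adjmx X = X -> adjmx Y = Y -> adjmx L = L ->
  mcomm Y (mcomm Y L) + mcomm X (mcomm X L) = 0 ->
  L *m X = X *m L /\ L *m Y = Y *m L.
Proof.
move=> hX hY hL /(congr1 (fun M => \tr (L *m M))).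
rewrite /= mulmxDr mxtraceD !tr_double_comm // mulmx0 mxtrace0.
move/eqP; rewrite paddr_eq0 ?tr_adjmx_ge0 //.
case/andP => /eqP/tr_adjmx_eq0/eqP commY /eqP/tr_adjmx_eq0/eqP commX.
by split; apply/esym/eqP; rewrite -subr_eq0.
Qed.

End Adjoint.

Section Commutant.
Local Open Scope ring_scope.
Context {F : fieldType} {n : nat}.
Implicit Types (A D M P Q V : 'M[F]_n) (d f l : 'rV[F]_n).

Lemma commute_conj P Q D M : P *m Q = 1%:M -> Q *m P = 1%:M ->
  M *m (P *m D *m Q) = (P *m D *m Q) *m M ->
  (Q *m M *m P) *m D = D *m (Q *m M *m P).
Proof.
move=> PQ QP /(congr1 (fun A => Q *m A *m P)) /=.
by rewrite !mulmxA QP mul1mx -!mulmxA QP mulmx1 !mulmxA.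
Qed.

Lemma commute_unconj P Q D M : P *m Q = 1%:M -> Q *m P = 1%:M ->
  (Q *m M *m P) *m D = D *m (Q *m M *m P) ->
  M *m (P *m D *m Q) = (P *m D *m Q) *m M.
Proof.
move=> PQ QP /(congr1 (fun A => P *m A *m Q)) /=.
by rewrite !mulmxA PQ mul1mx -!mulmxA PQ mulmx1 !mulmxA.
Qed.

(* A matrix commuting with diag(d) has M i j = 0 whenever d i <> d j, hence
   commutes with diag(f) for any f that is a function of d. *)
Lemma commute_diag_fun_diag d f M :
  (forall i j, d 0 i = d 0 j -> f 0 i = f 0 j) ->
  M *m diag_mx d = diag_mx d *m M -> M *m diag_mx f = diag_mx f *m M.
Proof.
move=> df /matrixP commM; apply/matrixP => i j.
move: (commM i j); rewrite !mul_mx_diag !mul_diag_mx !mxE => Mij.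
have [->|nzM] := eqVneq (M i j) 0; first by rewrite mulr0 mul0r.
by rewrite (df i j) 1?mulrC //; apply: (mulfI nzM); rewrite Mij mulrC.
Qed.

Lemma commute_diag_fun P Q d f M : P *m Q = 1%:M -> Q *m P = 1%:M ->
  (forall i j, d 0 i = d 0 j -> f 0 i = f 0 j) ->
  M *m (P *m diag_mx d *m Q) = (P *m diag_mx d *m Q) *m M ->
  M *m (P *m diag_mx f *m Q) = (P *m diag_mx f *m Q) *m M.
Proof.
move=> PQ QP df /(commute_conj _ _ _ _ PQ QP) commD.
apply: (commute_unconj _ _ _ _ PQ QP).
exact: (commute_diag_fun_diag _ _ _ df commD).
Qed.

Lemma commute_distinct_diag d M : injective (d 0) ->
  M *m diag_mx d = diag_mx d *m M -> forall i j, i != j -> M i j = 0.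
Proof.
move=> d_inj /matrixP commM i j; apply: contraNeq => nzM.
move: (commM i j); rewrite mul_mx_diag mul_diag_mx !mxE [d 0 i * _]mulrC.
by move=> /(mulfI nzM) /d_inj ->.
Qed.

Lemma commute_superdiag_scalar V M (i0 : 'I_n) : i0 = 0%N :> nat ->
  (forall i j, i != j -> M i j = 0) ->
  (forall i j : 'I_n, j = i.+1 :> nat -> V i j = 1) ->
  M *m V = V *m M -> M = (M i0 i0)%:M.
Proof.
move=> i0E Mdiag Vsup /matrixP commM.
have Mstep (i j : 'I_n) : j = i.+1 :> nat -> M i i = M j j.
  move=> ji; move: (commM i j); rewrite !mxE.
  rewrite (bigD1 i) //= big1 => [|k ki]; last by rewrite Mdiag ?mul0r // eq_sym.
  rewrite (bigD1 j) //= big1 => [|k kj]; last by rewrite (Mdiag k j) ?mulr0.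
  by rewrite !addr0 Vsup // mulr1 mul1r.
have Mconst k (lt_kn : (k < n)%N) : M (Ordinal lt_kn) (Ordinal lt_kn) = M i0 i0.
  elim: k lt_kn => [|k IHk] lt_kn.
    by congr (M _ _); apply: val_inj.
  by rewrite -(Mstep (Ordinal (ltnW lt_kn))) ?IHk.
apply/matrixP => i j; rewrite mxE.
have [<-|ij] := eqVneq i j; last by rewrite Mdiag // mulr0n.
by case: i => k lt_kn; rewrite Mconst mulr1n.
Qed.

Lemma conj_scalar P Q (a : F) : P *m Q = 1%:M -> P *m a%:M *m Q = a%:M.
Proof. by move=> PQ; rewrite mul_mx_scalar -scalemxAl PQ scalemx1. Qed.

Lemma conj_diag_scalar P Q l (a : F) : P *m Q = 1%:M -> Q *m P = 1%:M ->
  P *m diag_mx l *m Q = a%:M -> forall k, l 0 k = a.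
Proof.
move=> PQ QP conjl k.
have : diag_mx l = Q *m (P *m diag_mx l *m Q) *m P.
  by rewrite !mulmxA QP mul1mx -mulmxA QP mulmx1.
by rewrite conjl conj_scalar // => /matrixP/(_ k k); rewrite !mxE eqxx.
Qed.

Lemma diag_const l (a : F) : (forall k, l 0 k = a) -> diag_mx l = a%:M.
Proof. by move=> la; apply/matrixP => i j; rewrite !mxE la. Qed.

End Commutant.

Section Transport.
Local Open Scope ring_scope.
Local Notation K := (complex.complex R).

Definition phi (a : Defs.C) : K := complex.Complex (Defs.Re a) (Defs.Im a).

Lemma phi_inj : injective phi.
Proof. by case=> ? ?; case=> ? ? [-> ->]. Qed.

Lemma conj_phi_real r : (phi (RtoC r))^* = phi (RtoC r).
Proof.
by change (phi (Cconj (RtoC r)) = phi (RtoC r)); rewrite /Cconj /= Ropp_0.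
Qed.

Lemma phi_sum k f : phi (Csum k f) = \sum_(i < k) phi (f i).
Proof. by elim: k => [|k IHk]; rewrite ?big_ord0 // big_ord_recr /= -IHk. Qed.

Definition toM (n : nat) (A : Mat) : 'M[K]_n := \matrix_(i, j) phi (A i j).

Lemma MeqP n A B : Meq n A B <-> toM n A = toM n B.
Proof.
split=> [eqAB | /matrixP eqAB i j lt_in lt_jn].
  by apply/matrixP => i j; rewrite !mxE eqAB //; apply/ssrnat.ltP.
apply: phi_inj; move: (eqAB (Ordinal (introT ssrnat.ltP lt_in))
                           (Ordinal (introT ssrnat.ltP lt_jn))).
by rewrite !mxE.
Qed.

Lemma toM_mul n A B : toM n (Mmul n A B) = toM n A *m toM n B.
Proof.
apply/matrixP => i j; rewrite !mxE phi_sum.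
by apply: eq_bigr => k _; rewrite !mxE.
Qed.

Lemma toM_add n A B : toM n (Madd A B) = toM n A + toM n B.
Proof. by apply/matrixP => i j; rewrite !mxE. Qed.

Lemma toM_opp n A : toM n (Mopp A) = - toM n A.
Proof. by apply/matrixP => i j; rewrite !mxE. Qed.

Lemma toM_adj n A : toM n (Madj A) = adjmx (toM n A).
Proof. by apply/matrixP => i j; rewrite !mxE. Qed.

Lemma toM_diag n d : toM n (Mdiag d) = diag_mx (\row_k phi (d k)).
Proof.
apply/matrixP => i j; rewrite !mxE /Mdiag.
have [<-|ij] := eqVneq i j; first by rewrite Nat.eqb_refl mulr1n.
suff /Nat.eqb_neq -> : nat_of_ord i <> j by rewrite mulr0n.
by move=> /val_inj eq_ij; rewrite eq_ij eqxx in ij.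
Qed.

Lemma toM_zero n : toM n Mzero = 0.
Proof. by apply/matrixP => i j; rewrite !mxE. Qed.

Lemma toM_scal n a A : toM n (Mscal a A) = phi a *: toM n A.
Proof. by apply/matrixP => i j; rewrite !mxE. Qed.

Lemma toM_id n : toM n Mid = 1%:M.
Proof. by rewrite toM_diag; apply/matrixP => i j; rewrite !mxE. Qed.

Lemma toM_trace n A : phi (Mtrace n A) = \tr (toM n A).
Proof. by rewrite phi_sum; apply: eq_bigr => i _; rewrite mxE. Qed.

Lemma toM_comm n A B : toM n (comm n A B) = mcomm (toM n A) (toM n B).
Proof. by rewrite /comm /Msub toM_add toM_opp !toM_mul. Qed.

(* The Laplacian of Defs is ad_y^2 + ad_x^2 (the two signs of delta2 cancel). *)
Lemma toM_lap n x y L : toM n (lap n x y L) =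
  mcomm (toM n y) (mcomm (toM n y) (toM n L)) +
  mcomm (toM n x) (mcomm (toM n x) (toM n L)).
Proof.
by rewrite /lap /delta1 /delta2 !(toM_add, toM_opp, toM_comm) mcommNr opprK.
Qed.

Lemma hermitian_toM {n : nat} {A : Mat} :
  Defs.hermitian n A -> adjmx (toM n A) = toM n A.
Proof. by move/MeqP; rewrite toM_adj. Qed.

Lemma fcalc_toM n dom f A B : fcalc n dom f A B ->
  exists (P : 'M[K]_n) (d : nat -> R),
    [/\ P *m adjmx P = 1%:M, adjmx P *m P = 1%:M,
        forall k, (k < n)%coq_nat -> dom (d k),
        toM n A = P *m diag_mx (\row_(k < n) phi (RtoC (d k))) *m adjmx P
      & toM n B = P *m diag_mx (\row_(k < n) phi (f (d k))) *m adjmx P].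
Proof.
move=> [P [d [[PU UP] [dom_d [defA defB]]]]].
exists (toM n P), d.
move/MeqP: PU; move/MeqP: UP; move/MeqP: defA; move/MeqP: defB.
by rewrite !(toM_mul, toM_adj, toM_diag, toM_id); split.
Qed.

Lemma commute_fcalc {n dom f A B} {M : 'M[K]_n} : fcalc n dom f A B ->
  M *m toM n A = toM n A *m M -> M *m toM n B = toM n B *m M.
Proof.
case/fcalc_toM => P [d [PP' P'P _ -> ->]].
apply: commute_diag_fun => // i j; rewrite !mxE.
by move=> /(congr1 (@complex.Re _)) /= ->.
Qed.

Lemma fcalc_real_hermitian {n dom g A B} :
  fcalc n dom (fun t => RtoC (g t)) A B -> adjmx (toM n B) = toM n B.
Proof.
case/fcalc_toM => P [d [_ _ _ _ ->]].
rewrite !adjmxM adjmxK mulmxA; congr (_ *m _ *m _).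
apply/matrixP => i j; rewrite !mxE.
by have [->|_] := eqVneq i j; rewrite ?mulr1n ?mulr0n ?conjC0 ?conj_phi_real.
Qed.

End Transport.

Lemma cis_eq a b : cis a = cis b -> exists k : Z, a - b = 2 * (IZR k * PI).
Proof.
move=> [cos_ab sin_ab].
have cos1 : cos (a - b) = 1.
  by rewrite cos_minus -cos_ab -sin_ab; have := sin2_cos2 a; rewrite /Rsqr; lra.
have sin0 : sin ((a - b) / 2) = 0.
  have := cos_2a_sin ((a - b) / 2).
  rewrite (_ : 2 * ((a - b) / 2) = a - b); last by field.
  by rewrite cos1 => half; apply: Rsqr_0_uniq; rewrite /Rsqr; lra.
by have [k half_ab] := sin_eq_0_0 _ sin0; exists k; lra.
Qed.

Section CoprimeCancel.
Local Open Scope Z_scope.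

Lemma coprime_mul_cancel (m n i j : nat) (k : Z) :
  (1 <= m)%coq_nat -> Nat.gcd m n = 1%N -> (i < n)%coq_nat -> (j < n)%coq_nat ->
  Z.of_nat m * (Z.of_nat i - Z.of_nat j) = k * Z.of_nat n -> i = j.
Proof.
move=> m_pos gcd_mn lt_in lt_jn eq_mij.
have [u [v bez]] := Nat.gcd_bezout_pos m n m_pos; rewrite gcd_mn in bez.
set t := Z.of_nat u * k - Z.of_nat v * (Z.of_nat i - Z.of_nat j).
have multiple : Z.of_nat i - Z.of_nat j = t * Z.of_nat n.
  have bezZ : Z.of_nat u * Z.of_nat m = 1 + Z.of_nat v * Z.of_nat n by lia.
  by rewrite /t; nia.
clearbody t; by case: (Z.lt_trichotomy t 0) => [|[|]]; nia.
Qed.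

End CoprimeCancel.

Lemma qpow_inj n m i j : (1 <= m)%coq_nat -> Nat.gcd m n = 1%N ->
  (i < n)%coq_nat -> (j < n)%coq_nat -> qpow n m i = qpow n m j -> i = j.
Proof.
move=> m_pos gcd_mn lt_in lt_jn /cis_eq [k eq_k].
have n_pos : 0 < INR n by apply: lt_0_INR; lia.
have PI_pos := PI_RGT_0.
have eqR : INR m * (INR i - INR j) = IZR k * INR n.
  rewrite (_ : INR m * _ = (2 * PI * INR m * INR i / INR n
                              - 2 * PI * INR m * INR j / INR n) * INR n / (2 * PI)).
    by rewrite eq_k; field; lra.
  by field; lra.
rewrite !INR_IZR_INZ -minus_IZR -!mult_IZR in eqR.
exact: (coprime_mul_cancel m n i j k m_pos gcd_mn lt_in lt_jn (eq_IZR _ _ eqR)).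
Qed.

Section FixedPoint.
Local Open Scope ring_scope.
Local Notation K := (complex.complex R).

Lemma toM_vmat_superdiag n (i j : 'I_n) :
  j = i.+1 :> nat -> toM n (vmat n) i j = 1.
Proof.
move=> ji; rewrite mxE /vmat.
suff -> : Nat.modulo (S i) n = j by rewrite Nat.eqb_refl.
by rewrite ji Nat.mod_small //; apply/ssrnat.ltP; rewrite -ji.
Qed.

Lemma commutant_uv {n m} {M : 'M[K]_n} (i0 : 'I_n) : i0 = 0%N :> nat ->
  (1 <= m)%coq_nat -> Nat.gcd m n = 1%N ->
  M *m toM n (umat n m) = toM n (umat n m) *m M ->
  M *m toM n (vmat n) = toM n (vmat n) *m M -> M = (M i0 i0)%:M.
Proof.
move=> i0E m_pos gcd_mn; rewrite /umat toM_diag => commU commV.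
have q_inj : injective ((\row_(k < n) phi (qpow n m k)) 0).
  move=> i j; rewrite !mxE => /phi_inj /qpow_inj eq_ij.
  by apply/val_inj/eq_ij => //; apply/ssrnat.ltP.
have Mdiag := commute_distinct_diag _ _ q_inj commU.
exact: (commute_superdiag_scalar _ _ _ i0E Mdiag (@toM_vmat_superdiag n) commV).
Qed.

(* If log c is scalar then so is c, since ln is injective on the (positive)
   eigenvalues of c. *)
Lemma log_scalar {n c L} {lam : K} (i0 : 'I_n) : is_log n c L ->
  toM n L = lam%:M -> exists e0 : R, toM n c = (phi (RtoC e0))%:M.
Proof.
case/fcalc_toM => P [d [PP' P'P d_pos -> defL]] Lscalar; exists (d i0).
have ln_d := conj_diag_scalar _ _ _ _ PP' P'P (etrans (esym defL) Lscalar).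
have d_const (k : 'I_n) : d k = d i0.
  move: (ln_d k) (ln_d i0); rewrite !mxE => <- /(congr1 (@complex.Re _)) /= /esym.
  by apply: ln_inv; apply: d_pos; apply/ssrnat.ltP.
rewrite (diag_const _ (phi (RtoC (d i0)))) ?conj_scalar // => k.
by rewrite mxE d_const.
Qed.

Lemma trace_scalar_eq {n c} {e0 gamma : R} : (0 < n)%N ->
  toM n c = (phi (RtoC e0))%:M -> Mtrace n c = RtoC (INR n * gamma) ->
  e0 = gamma.
Proof.
move=> n_pos defc /(congr1 phi); rewrite toM_trace defc mxtrace_scalar.
change ((e0%:C *+ n = (INR n * gamma)%:C)%C -> e0 = gamma).
rewrite -rmorphMn => /complexI; rewrite INRE -mulr_natl.
by apply: mulfI; rewrite pnatr_eq0 -lt0n.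
Qed.

(* Core statement: if L = log c lies in the kernel of the Laplacian, then c
   is the scalar tr(c)/n. *)
Theorem ricci_fixed_point_scalar n m x y gamma c L :
  (0 < n)%coq_nat -> (1 <= m)%coq_nat -> Nat.gcd m n = 1%N ->
  Defs.hermitian n x -> Defs.hermitian n y ->
  is_exp2pi n x (umat n m) -> is_exp2pi n y (vmat n) -> is_log n c L ->
  Meq n (lap n x y L) Mzero -> Mtrace n c = RtoC (INR n * gamma) ->
  Meq n c (Mscal (RtoC gamma) Mid).
Proof.
move=> /ssrnat.ltP n_pos m_pos gcd_mn herm_x herm_y exp_x exp_y log_c lap0 tr_c.
pose i0 : 'I_n := Ordinal n_pos.
move/MeqP: lap0; rewrite toM_lap toM_zero => lapL.
have [commX commY] := laplacian_kernel (hermitian_toM herm_x)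
  (hermitian_toM herm_y) (fcalc_real_hermitian log_c) lapL.
have commU := commute_fcalc exp_x commX.
have commV := commute_fcalc exp_y commY.
have Lscalar := commutant_uv i0 erefl m_pos gcd_mn commU commV.
have [e0 defc] := log_scalar i0 log_c Lscalar.
have <- := trace_scalar_eq n_pos defc tr_c.
by apply/MeqP; rewrite defc toM_scal toM_id scalemx1.
Qed.

End FixedPoint.

End RicciFixedPoint.

Theorem mainTheorem4 :
  forall (n m : nat),
    (2 <= n)%nat -> (1 <= m <= n - 1)%nat -> Nat.gcd m n = 1%nat ->
    forall (x y : Mat),
      hermitian n x -> hermitian n y ->
      is_exp2pi n x (umat n m) -> is_exp2pi n y (vmat n) ->
      forall (gamma : R), 0 < gamma ->
      forall (c L : Mat),
        strictly_positive n c ->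
        is_log n c L ->
        Meq n (lap n x y L) Mzero ->
        Mtrace n c = RtoC (INR n * gamma) ->
        Meq n c (Mscal (RtoC gamma) Mid).
Proof.
intros n m n_ge2 [m_pos _] gcd_mn x y herm_x herm_y exp_x exp_y gamma _ c L _
  log_c lap0 tr_c.
exact (RicciFixedPoint.ricci_fixed_point_scalar n m x y gamma c L ltac:(lia)
  m_pos gcd_mn herm_x herm_y exp_x exp_y log_c lap0 tr_c).
Qed.
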